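(* Let $G=(V,E)$ be a graph with a string representation $\varphi$ in the plane, let $D\subseteq V$, and let $R\subseteq\mathbb{R}^2$ be a region. If $\pi$ is a shortest curve relative to $D$ and $\pi'\subseteq R$ is a sub-curve of $\pi$, then $\pi'$ is a shortest curve relative to $D\cap V|_R$ in $G|_R$ with representation $\varphi|_R$.
   Context: A string representation assigns to each vertex $v$ a bounded curve $\varphi(v)\subseteq\mathbb{R}^2$ with distinct $u,v$ adjacent iff the curves intersect; representations are assumed to have finitely many intersection points, no touching, no triple points, no self-intersections. Faces of the representation are the arc-connected components of the complement of all strings; a region is the closure of a union of some faces. For a closed region $R$, $G|_R=(V|_R,E|_R)$ is the intersection graph of the arc-connected components of the sets $\varphi(v)\cap R$ (each such component is a new vertex, a split of $v$), with representation $\varphi|_R$ given by these components. A path $P$ is a shortest path relative to $D$ if it is shortest in $G[P\cup D]$. For such $P$ from $u$ to $v$ and points $A\in\varphi(u)$, $B\in\varphi(v)$, a curve $\pi\subseteq\bigcup_{p\in P}\varphi(p)$ from $A$ to $B$ whose intersection with each $\varphi(p)$ is connected, these intersections occurring along $\pi$ in the order of $P$, is a shortest curve of $P$ relative to $D$; a shortest curve relative to $D$ is one for some shortest path relative to $D$. *)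

From HB Require Import structures.
From mathcomp Require Import all_boot all_order all_algebra.
From mathcomp Require Import all_classical all_reals all_analysis.
From Stdlib Require Lists.List.
Set Implicit Arguments. Unset Strict Implicit. Unset Printing Implicit Defensive.
Import Order.TTheory GRing.Theory Num.Theory.
Import numFieldNormedType.Exports.
Local Open Scope classical_set_scope.
Local Open Scope ring_scope.

Section StringDefs.
Variable R : realType.
Local Notation P := (R * R)%type.

Definition I01 : set R := [set s | 0 <= s <= 1].

Definition arc_param (g : R -> P) : Prop :=
  {within I01, continuous g} /\
  (forall s t, I01 s -> I01 t -> g s = g t -> s = t).

Definition is_arc (S : set P) : Prop :=
  exists g, arc_param g /\ S = g @` I01.

Definition arc_between (A : set P) (x y : P) : Prop :=
  exists g, arc_param g /\ g 0 = x /\ g 1 = y /\ g @` I01 `<=` A.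

Definition arc_rel (A : set P) (x y : P) : Prop :=
  A x /\ A y /\ (x = y \/ arc_between A x y).

Definition arc_component (A : set P) (C : set P) : Prop :=
  exists x, A x /\ C = [set y | arc_rel A x y].

(* S1 and S2 cross (transversally, no touching) at x: locally homeomorphic to
   the two coordinate axes crossing at the origin *)
Definition crossing (S1 S2 : set P) (x : P) : Prop :=
  exists (U : set P) (h k : P -> P),
    open U /\ U x /\ open (h @` U) /\
    {within U, continuous h} /\ {within h @` U, continuous k} /\
    (forall y, U y -> k (h y) = y) /\ h x = (0, 0) /\
    h @` (U `&` S1) = h @` U `&` [set q | q.2 = 0] /\
    h @` (U `&` S2) = h @` U `&` [set q | q.1 = 0].

Definition string_rep (V : finType) (phi : V -> set P) : Prop :=
  (forall v, is_arc (phi v)) /\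
  (forall u v, u != v -> finite_set (phi u `&` phi v)) /\
  (forall u v w, u != v -> v != w -> u != w -> phi u `&` phi v `&` phi w = set0) /\
  (forall u v x, u != v -> phi u x -> phi v x -> crossing (phi u) (phi v) x).

Section Graph.
Variable I : Type.
Variable phi : I -> set P.

Definition adj (u v : I) : Prop := u <> v /\ exists x, phi u x /\ phi v x.

Fixpoint adj_chain (p : seq I) : Prop :=
  match p with
  | x :: ((y :: _) as q) => adj x y /\ adj_chain q
  | _ => True
  end.

Definition walk (S : set I) (u v : I) (p : seq I) : Prop :=
  exists p', p = u :: p' /\ last u p' = v /\ adj_chain p /\
    (forall x, Stdlib.Lists.List.In x p -> S x).

Definition gpath (u v : I) (p : seq I) : Prop :=
  walk setT u v p /\ Stdlib.Lists.List.NoDup p.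

(* p is a shortest u-v path relative to D: shortest in G[p ∪ D] *)
Definition shortest_rel (D : set I) (u v : I) (p : seq I) : Prop :=
  gpath u v p /\
  forall q, walk [set x | Stdlib.Lists.List.In x p \/ D x] u v q -> (size p <= size q)%N.

Definition curve_of (u : I) (p : seq I) (g : R -> P) : Prop :=
  arc_param g /\
  (forall s, I01 s -> exists x, Stdlib.Lists.List.In x p /\ phi x (g s)) /\
  (forall x, Stdlib.Lists.List.In x p -> connected (g @` I01 `&` phi x)) /\
  (forall i j s t, (i < j)%N -> (j < size p)%N -> I01 s -> I01 t ->
     phi (nth u p i) (g s) -> phi (nth u p j) (g t) -> s <= t).

Definition shortest_curve (D : set I) (pi : set P) : Prop :=
  exists (u v : I) (p : seq I) (g : R -> P),
    shortest_rel D u v p /\ curve_of u p g /\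
    phi u (g 0) /\ phi v (g 1) /\ pi = g @` I01.
End Graph.

Definition sub_curve (pi' pi : set P) : Prop :=
  exists g, arc_param g /\ pi = g @` I01 /\
    exists a b, 0 <= a /\ a < b /\ b <= 1 /\ pi' = g @` [set s | a <= s <= b].

Definition is_face (V : finType) (phi : V -> set P) (F : set P) : Prop :=
  arc_component (~` [set x | exists v, phi v x]) F.

Definition is_region (V : finType) (phi : V -> set P) (Rg : set P) : Prop :=
  exists Fs : set (set P), (forall F, Fs F -> is_face phi F) /\
    Rg = closure (\bigcup_(F in Fs) F).

(* restriction G|_R: vertices are splits (v, C), C an arc-component of phi v ∩ R *)
Definition split_vertex (V : finType) (phi : V -> set P) (Rg : set P) : Type :=
  {vc : V * set P | arc_component (phi vc.1 `&` Rg) vc.2}.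

Definition restr_rep (V : finType) (phi : V -> set P) (Rg : set P)
  : split_vertex phi Rg -> set P := fun s => (sval s).2.

(* D ∩ V|_R : the splits of vertices of D *)
Definition restr_set (V : finType) (phi : V -> set P) (Rg : set P) (D : set V)
  : set (split_vertex phi Rg) := fun s => D (sval s).1.

End StringDefs.

Arguments restr_rep {R V} phi Rg _.
Arguments restr_set {R V} phi Rg D _.

(* A sub-curve of an arc [g([0,1])] is [g([a,b])] for a parameter interval
   [[a,b]], because the preimage under an injective continuous [g] of a connected
   subset of the arc is an interval.  For the j-th vertex of the path [p], the
   parameters in [[a,b]] mapped onto its string form a closed interval (its
   trace); the traces cover [[a,b]] and occur in the order of [p], so
   consecutive nonempty traces share a point.  Each nonempty trace is mapped into
   a single arc-component of [phi (p j) ∩ R], i.e. into one split vertex, and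
   these splits form a path of [G|_R] along which [g] restricted to [[a,b]] is a
   curve.  This path is shortest relative to [D ∩ V|_R]: projecting a walk of
   [G|_R] to [G] does not make it longer, so a shorter walk between the end
   splits would shortcut [p] in [G[p ∪ D]]. *)

From HB Require Import structures.
From mathcomp Require Import all_boot all_order all_algebra.
From mathcomp Require Import all_classical all_reals all_analysis.
From mathcomp Require Import lra zify.
Set Implicit Arguments. Unset Strict Implicit. Unset Printing Implicit Defensive.
Import Order.TTheory GRing.Theory Num.Theory.
Import numFieldNormedType.Exports.
Local Open Scope classical_set_scope.
Local Open Scope ring_scope.

Section RealLine.
Variable R : realType.
Local Notation P := (R * R)%type.

Definition seg (a b : R) : set R := [set s | a <= s <= b].

Lemma segE a b : seg a b = `[a, b]%classic.
Proof. by apply/seteqP; split => x; rewrite /seg /= in_itv. Qed.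

Lemma seg_compact a b : compact (seg a b).
Proof. by rewrite segE; exact: segment_compact. Qed.

Lemma seg_closed a b : closed (seg a b).
Proof. by rewrite segE; exact: interval_closed. Qed.

Lemma seg_is_interval a b : is_interval (seg a b).
Proof. by rewrite segE; exact: interval_is_interval. Qed.

Lemma seg_sub_I01 a b : 0 <= a -> b <= 1 -> seg a b `<=` @I01 R.
Proof.
by move=> a0 b1 x /andP[ax xb]; apply/andP; split; [exact: le_trans ax|exact: le_trans b1].
Qed.

Lemma within_continuous_precomp (A B : set R) (f : R -> R) (g : R -> P) :
  continuous f -> f @` B `<=` A -> {within A, continuous g} ->
  {within B, continuous (g \o f)}.
Proof.
move=> cf fBA cg; apply/subspace_continuousP => x Bx.
have gA := (subspace_continuousP A g).1 cg (f x) (fBA _ (imageP _ Bx)).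
apply: cvg_comp gA => W /=; rewrite /within /= !nbhs_simpl => /(cf x).
rewrite /= nbhs_simpl; apply: (@filterS _ (nbhs x) _ (fun t => A (f t) -> W (f t))).
by move=> y AW By; exact/AW/fBA/imageP.
Qed.

Lemma closed_within_preimage (B : set R) (g : R -> P) (K : set P) :
  closed B -> {within B, continuous g} -> closed K -> closed (B `&` g @^-1` K).
Proof.
move=> cB cg cK.
have : closed (g @^-1` K : set (subspace B)).
  by apply: preimage_closed => // x _; apply: cg.
case/closed_subspaceP => W cW e.
by rewrite setIC -e; exact: closedI.
Qed.

Lemma compact_image_closed (B : set R) (g : R -> P) :
  compact B -> {within B, continuous g} -> closed (g @` B).
Proof.
move=> cB cg; apply: compact_closed; first exact: norm_hausdorff.
exact: continuous_compact.
Qed.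

Lemma closed_has_max (A : set R) : closed A -> A !=set0 -> has_ubound A ->
  exists2 m, A m & forall x, A x -> x <= m.
Proof.
move=> cA A0 ubA; exists (sup A); last by move=> x Ax; exact: sup_upper_bound.
by have := closure_sup A0 ubA; rewrite -(closure_id A).1.
Qed.

Lemma closed_has_min (A : set R) : closed A -> A !=set0 -> has_lbound A ->
  exists2 m, A m & forall x, A x -> m <= x.
Proof.
move=> cA [x0 Ax0] [l lbA].
have cNA : closed [set y : R | A (- y)].
  by apply: (@preimage_closed _ _ -%R) => // y _; exact: oppr_continuous.
have NA0 : [set y | A (- y)] !=set0 by exists (- x0); rewrite /= opprK.
have ubNA : has_ubound [set y | A (- y)] by exists (- l) => y Ay; rewrite lerNr; exact: lbA.
have [m Am maxm] := closed_has_max cNA NA0 ubNA.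
by exists (- m) => // x Ax; rewrite lerNl; apply: maxm; rewrite /= opprK.
Qed.

Lemma closed_interval_seg (A : set R) : closed A -> is_interval A -> A !=set0 ->
  has_lbound A -> has_ubound A -> exists a b, A = seg a b.
Proof.
move=> cA iA A0 lbA ubA.
have [a Aa mina] := closed_has_min cA A0 lbA.
have [b Ab maxb] := closed_has_max cA A0 ubA.
exists a, b; apply/seteqP; split => [x Ax|x]; first by apply/andP; split; auto.
exact: iA.
Qed.

End RealLine.

Section Reparametrization.
Variable R : realType.
Local Notation P := (R * R)%type.

Definition lerp (c d r : R) : R := c + r * (d - c).

Lemma lerp_continuous c d : continuous (lerp c d).
Proof. by move=> x; apply: cvgD; [exact: cvg_cst|apply: cvgMl; exact: cvg_id]. Qed.

Lemma lerp0 c d : lerp c d 0 = c.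
Proof. by rewrite /lerp mul0r addr0. Qed.

Lemma lerp1 c d : lerp c d 1 = d.
Proof. by rewrite /lerp mul1r addrC subrK. Qed.

Lemma is_interval_lerp (X : set R) c d r :
  is_interval X -> X c -> X d -> I01 r -> X (lerp c d r).
Proof.
rewrite /lerp => iX Xc Xd /andP[r0 r1]; have [cd|dc] := leP c d.
  by apply: (iX c d) => //; apply/andP; split; nra.
by apply: (iX d c) => //; apply/andP; split; nra.
Qed.

Lemma lerp_inj c d : c != d -> injective (lerp c d).
Proof.
rewrite /lerp => cd r s /addrI /eqP; rewrite -subr_eq0 -mulrBl mulf_eq0 !subr_eq0.
by case/orP => /eqP // dc; rewrite dc eqxx in cd.
Qed.

Lemma ler_lerp c d s t : c < d -> (lerp c d s <= lerp c d t) = (s <= t).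
Proof. by move=> cd; rewrite /lerp lerD2l ler_pM2r // subr_gt0. Qed.

Lemma arc_param_lerp (g : R -> P) c d :
  arc_param g -> I01 c -> I01 d -> c != d -> arc_param (g \o lerp c d).
Proof.
have iI01 : is_interval (@I01 R) := @seg_is_interval R 0 1.
move=> [cg ig] Ic Id cd; split.
  apply: within_continuous_precomp cg; first exact: lerp_continuous.
  by move=> _ [r Ir <-]; exact: is_interval_lerp.
move=> s t Is It /ig; move/(_ (is_interval_lerp iI01 Ic Id Is)).
by move/(_ (is_interval_lerp iI01 Ic Id It)); exact: lerp_inj.
Qed.

Lemma image_lerp (g : R -> P) c d : c < d -> (g \o lerp c d) @` @I01 R = g @` seg c d.
Proof.
move=> cd; apply/seteqP; split=> y.
  case=> r Ir <-; exists (lerp c d r) => //.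
  by apply: is_interval_lerp Ir; [exact: seg_is_interval|apply/andP; split|apply/andP; split];
    rewrite ?lexx ?ltW.
case=> s /andP[cs sd] <-; have dc0 : d - c != 0 by rewrite subr_eq0 gt_eqF.
exists ((s - c) / (d - c)); last by rewrite /= /lerp mulfVK // addrC subrK.
apply/andP; split; first by rewrite divr_ge0 // subr_ge0 // ltW.
by rewrite ler_pdivrMr ?subr_gt0 // mul1r lerB.
Qed.

Lemma arc_rel_image_interval (g : R -> P) (A : set P) (X : set R) s t :
  arc_param g -> X `<=` @I01 R -> is_interval X -> g @` X `<=` A -> X s -> X t ->
  arc_rel A (g s) (g t).
Proof.
move=> ag XI iX gXA Xs Xt; split; first exact/gXA/imageP.
split; first exact/gXA/imageP.
have [->|st] := eqVneq s t; [by left|right].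
exists (g \o lerp s t); split; first by apply: arc_param_lerp => //; exact: XI.
split; first by rewrite /= lerp0.
split; first by rewrite /= lerp1.
by move=> _ [r Ir <-]; apply/gXA/imageP; exact: is_interval_lerp.
Qed.

End Reparametrization.

Section SubCurves.
Variable R : realType.
Local Notation P := (R * R)%type.

Lemma I01_is_interval : is_interval (@I01 R).
Proof. exact: seg_is_interval. Qed.

Lemma arc_image_closed (g : R -> P) a b :
  arc_param g -> 0 <= a -> b <= 1 -> closed (g @` seg a b).
Proof.
move=> [cg _] a0 b1; apply: compact_image_closed; first exact: seg_compact.
exact: continuous_subspaceW (seg_sub_I01 a0 b1) cg.
Qed.

(* Splitting the arc at a parameter [tau] missed by [K] separates [K] into the
   relatively closed pieces lying on either side of [g tau]. *)
Lemma arc_preimage_is_interval (g : R -> P) (K : set P) :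
  arc_param g -> connected K -> K `<=` g @` @I01 R -> is_interval (@I01 R `&` g @^-1` K).
Proof.
move=> ag cK KI s t [Is Ks] [It Kt] tau /andP[stau taut].
have Itau : I01 tau by apply: (I01_is_interval Is It); apply/andP.
have [tau0 tau1] : 0 <= tau /\ tau <= 1 by case/andP: Itau.
split => //; apply: contrapT => NKtau.
pose K0 := g @` seg 0 tau; pose K1 := g @` seg tau 1.
have cK0 : closed K0 by apply: arc_image_closed.
have cK1 : closed K1 by apply: arc_image_closed.
have K01 y : K y -> K0 y \/ K1 y.
  move=> /KI[w /andP[w0 w1] <-]; have [wt|tw] := leP w tau.
    by left; exists w => //; apply/andP.
  by right; exists w => //; apply/andP; split => //; exact: ltW.
have K0K1 y : K y -> K0 y -> K1 y -> False.
  move=> Ky [w0 /andP[w00 w0t] e0] [w1 /andP[tw1 w11] e1].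
  have ew : w0 = w1.
    apply: ag.2; rewrite ?e0 ?e1 //; apply/andP; split => //.
    - exact: le_trans tau1.
    - exact: le_trans tw1.
  suff ewt : w0 = tau by apply: NKtau; rewrite /preimage /= -ewt e0.
  by apply/eqP; rewrite eq_le w0t ew tw1.
have KK0 : K `&` K0 = K.
  apply: cK; first by exists (g s); split => //; exists s => //; apply/andP; split;
    [case/andP: Is|].
  - exists (~` K1); first exact: closed_openC.
    apply/seteqP; split=> y [Ky Hy]; split => //; first by move/(K0K1 y Ky Hy).
    by case: (K01 y Ky).
  - by exists K0.
have [w /andP[w0 wt] /ag.2 ewt] : K0 (g t) by rewrite -KK0 in Kt; case: Kt.
have wt' : w = t by apply: ewt => //; apply/andP; split => //; exact: le_trans tau1.
have ett : t = tau by apply/eqP; rewrite eq_le taut -wt' wt.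
by apply: NKtau; rewrite /preimage /= -ett.
Qed.

Lemma sub_curve_param (g : R -> P) pi' :
  arc_param g -> sub_curve pi' (g @` @I01 R) ->
  exists a b, [/\ 0 <= a, a < b, b <= 1 & pi' = g @` seg a b].
Proof.
move=> ag [g1 [ag1 [eg1 [a1 [b1 [a10 [ab1 [b11 epi']]]]]]]].
have sab1 := seg_sub_I01 a10 b11.
have pi'g : pi' `<=` g @` @I01 R by rewrite eg1 epi'; exact: image_subset.
pose J := @I01 R `&` g @^-1` pi'.
have cJ : closed J.
  apply: closed_within_preimage; [exact: seg_closed|exact: ag.1|].
  by rewrite epi'; exact: arc_image_closed.
have iJ : is_interval J.
  apply: arc_preimage_is_interval => //; rewrite epi'.
  have cseg : connected (seg a1 b1) by rewrite segE; exact: segment_connected.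
  exact: connected_continuous_connected cseg (continuous_subspaceW sab1 ag1.1).
have pi'_in_J y : pi' y -> exists2 s, J s & g s = y.
  by move=> /[dup] /pi'g [s Is <-] ?; exists s.
have [s1 Js1 es1] : exists2 s, J s & g s = g1 a1.
  by apply: pi'_in_J; rewrite epi'; apply: imageP; apply/andP; split; rewrite ?lexx ?ltW.
have [s2 Js2 es2] : exists2 s, J s & g s = g1 b1.
  by apply: pi'_in_J; rewrite epi'; apply: imageP; apply/andP; split; rewrite ?lexx ?ltW.
have J0 : J !=set0 by exists s1.
have lbJ : has_lbound J by exists 0 => x [/andP[]].
have ubJ : has_ubound J by exists 1 => x [/andP[]].
have [a [b eJ]] := closed_interval_seg cJ iJ J0 lbJ ubJ.
move: (Js1) (Js2); rewrite eJ => /andP[as1 s1b] /andP[as2 s2b].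
have [/andP[a0 _] _] : J a by rewrite eJ /seg /= lexx (le_trans as1 s1b).
have [/andP[_ b_le1] _] : J b by rewrite eJ /seg /= lexx (le_trans as1 s1b).
have s12 : s1 != s2.
  apply/eqP => e; suff a1b1 : a1 = b1 by rewrite a1b1 ltxx in ab1.
  have [Ia1 Ib1] : I01 a1 /\ I01 b1.
    by split; apply: sab1; apply/andP; split; rewrite ?lexx // ltW.
  by apply: ag1.2 => //; rewrite -es1 -es2 e.
exists a, b; split => //.
  rewrite lt_neqAle (le_trans as1 s1b) andbT; apply: contraNneq s12 => eab.
  by rewrite eq_le; apply/andP; split; lra.
by rewrite -eJ; apply/seteqP; split => [y /pi'_in_J [s Js <-]|_ [s [_ ?] <-]].
Qed.

End SubCurves.

Lemma In_mem (T : eqType) (x : T) s : List.In x s <-> x \in s.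
Proof.
elim: s => [|y s IH] //=; rewrite in_cons; split.
  by case=> [->|/IH ->]; rewrite ?eqxx ?orbT.
by case/orP => [/eqP ->|/IH]; [left|right].
Qed.

Lemma NoDup_uniq (T : eqType) (s : seq T) : List.NoDup s <-> uniq s.
Proof.
elim: s => [|x s IH] /=; first by split => // _; constructor.
split; first by case/List.NoDup_cons_iff => /In_mem/negP -> /IH.
by case/andP => /negP nx /IH; constructor => // /In_mem.
Qed.

Lemma List_mapE (A B : Type) (f : A -> B) s : List.map f s = map f s.
Proof. by elim: s => //= x s ->. Qed.

Lemma In_mapP (A B : Type) (f : A -> B) s y :
  List.In y (map f s) <-> exists x, f x = y /\ List.In x s.
Proof. by rewrite -List_mapE; exact: List.in_map_iff. Qed.

Lemma In_map (A B : Type) (f : A -> B) s x : List.In x s -> List.In (f x) (map f s).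
Proof. by rewrite -List_mapE; exact: List.in_map. Qed.

Lemma In_take (T : Type) (z : T) i s : List.In z (take i s) -> List.In z s.
Proof. by rewrite -{2}(cat_take_drop i s) => zs; apply: List.in_or_app; left. Qed.

Lemma In_drop (T : Type) (z : T) i s : List.In z (drop i s) -> List.In z s.
Proof. by rewrite -{2}(cat_take_drop i s) => zs; apply: List.in_or_app; right. Qed.

Section SortedNat.
Variable s : seq nat.
Hypothesis s_sorted : sorted ltn s.

Lemma sorted_ltn_bounds j : j \in s -> (head 0 s <= j <= last 0 s)%N.
Proof.
case: s s_sorted => [|x s'] //= ps xs'; apply/andP; split.
  move: xs'; rewrite inE => /orP[/eqP -> //|js'].
  by have /allP/(_ j js')/ltnW := order_path_min ltn_trans ps.
elim: s' x ps j xs' => [|y s' IH] x /=; first by move=> _ j; rewrite inE => /eqP ->.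
case/andP=> xy ps j; rewrite inE => /orP[/eqP ->|]; last exact: IH.
exact: leq_trans (ltnW xy) (IH y ps y (mem_head _ _)).
Qed.

Lemma sorted_ltn_size : (size s <= (last 0 s - head 0 s).+1)%N.
Proof.
rewrite -(size_iota (head 0 s) (last 0 s - head 0 s).+1).
apply: uniq_leq_size; first exact: sorted_uniq ltn_trans ltnn _ s_sorted.
move=> j /sorted_ltn_bounds /andP[hj jl]; rewrite mem_iota hj addnS subnKC //.
exact: leq_trans hj jl.
Qed.

End SortedNat.

Section Walks.
Variables (R : realType) (I : Type) (phi : I -> set (R * R)).
Implicit Types (S W : set I) (s t : seq I).

Lemma adj_chain_cat x s1 y s2 : adj_chain phi (x :: s1) -> adj phi (last x s1) y ->
  adj_chain phi (y :: s2) -> adj_chain phi (x :: s1 ++ y :: s2).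
Proof.
elim: s1 x => [|z s1 IH] x /=; first by move=> _ xy ch2; split.
by case=> xz ch1 zy ch2; split => //; exact: IH.
Qed.

Lemma adj_chain_nth x0 s i : adj_chain phi s -> (i.+1 < size s)%N ->
  adj phi (nth x0 s i) (nth x0 s i.+1).
Proof.
elim: s i => [|x [|y s] IH] i //= [xy ch].
by case: i => [|i] //= /(IH i ch).
Qed.

Lemma adj_chain_take i s : adj_chain phi s -> adj_chain phi (take i s).
Proof.
elim: s i => [|x [|y s] IH] [|i] //= [xy ch].
by case: i => [|i] //=; split => //; exact: (IH i.+1 ch).
Qed.

Lemma adj_chain_drop i s : adj_chain phi s -> adj_chain phi (drop i s).
Proof. by elim: s i => [|x [|y s] IH] [|i] //= [_ /IH]. Qed.

Lemma walk_sub S W u v s : S `<=` W -> walk phi S u v s -> walk phi W u v s.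
Proof.
move=> SW [s' [-> [lv [ch Ss]]]]; exists s'.
by split => //; split => //; split => // z /Ss/SW.
Qed.

Lemma walk_cons S x u v s : adj phi x u -> S x -> walk phi S u v s ->
  walk phi S x v (x :: s).
Proof.
move=> xu Sx [s' [-> [lv [ch Ss]]]]; exists (u :: s'); split => //; split => //.
by split => // z /= [<-|/Ss].
Qed.

Lemma walk_cat S x y s1 y' z s2 : walk phi S x y s1 -> adj phi y y' ->
  walk phi S y' z s2 -> walk phi S x z (s1 ++ s2).
Proof.
move=> [s1' [-> [<- [ch1 S1]]]] yy' [s2' [-> [<- [ch2 S2]]]].
exists (s1' ++ y' :: s2'); split => //; split; first by rewrite last_cat.
split; first exact: adj_chain_cat.
by move=> w /(List.in_app_or (x :: s1') (y' :: s2')) [/S1|/S2].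
Qed.

Lemma walk_take S u v s i : walk phi S u v s -> (0 < i <= size s)%N ->
  walk phi S u (nth u s i.-1) (take i s).
Proof.
move=> [s' [-> [_ [ch Ss]]]]; case: i => [|i] //= is'.
exists (take i s'); split => //; split.
  elim: s' i u is' {ch Ss} => [|y s' IH] [|i] x //= is'.
  by rewrite IH //; apply: set_nth_default.
by split; [exact: (adj_chain_take i.+1 ch)|move=> w /(@In_take _ w i.+1 (u :: s'))/Ss].
Qed.

Lemma walk_drop S u v s k : walk phi S u v s -> (k < size s)%N ->
  walk phi S (nth u s k) v (drop k s).
Proof.
move=> [s' [es [lv [ch Ss]]]] ks; exists (drop k.+1 s); split; first exact: drop_nth.
split; last by split; [exact: adj_chain_drop|move=> w /(@In_drop _ w k s)/Ss].
rewrite es /= -lv; move: ks; rewrite es /=.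
elim: s' k u {es lv ch Ss} => [|y s' IH] [|k] x //= ks.
by rewrite -(IH k y) //; congr last; apply: set_nth_default.
Qed.

Lemma walk_splice S u v s i k t : walk phi S u v s -> (i <= k < size s)%N ->
  walk phi S (nth u s i) (nth u s k) t ->
  walk phi S u v (take i s ++ t ++ drop k.+1 s).
Proof.
move=> ws /andP[ik ks] wt; have chs : adj_chain phi s by case: ws => ? [_ [_ []]].
have wt' : walk phi S (nth u s i) v (t ++ drop k.+1 s).
  have [ks1|] := ltnP k.+1 (size s).
    by apply: walk_cat wt (adj_chain_nth u chs ks1) (walk_drop ws ks1).
  move=> sk; have ek : k.+1 = size s by apply/eqP; rewrite eqn_leq ks.
  rewrite ek drop_size cats0; suff -> : v = nth u s k by [].
  by case: ws ek => s' [-> [<- _]] /= [->]; rewrite nth_last; case: s'.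
case: i ik wt wt' => [|i] ik wt wt'; first by case: ws wt' => s' [-> _].
apply: walk_cat (walk_take ws _) _ wt'; first by rewrite /= (ltnW (leq_ltn_trans ik ks)).
exact: adj_chain_nth (leq_ltn_trans ik ks).
Qed.

Lemma shortest_rel_infix_size D u v s i k t : shortest_rel phi D u v s ->
  (i <= k < size s)%N ->
  walk phi [set x | List.In x s \/ D x] (nth u s i) (nth u s k) t ->
  (k - i < size t)%N.
Proof.
move=> [[ws _] min_s] /andP[ik ks] wt.
have ws' : walk phi [set x | List.In x s \/ D x] u v s.
  case: ws => s' [es [lv [ch _]]]; exists s'; rewrite -es.
  by split => //; split => //; split => // x; left.
have := min_s _ (walk_splice ws' _ wt); rewrite ik ks => /(_ isT).
rewrite !size_cat size_takel ?size_drop; last exact: ltnW (leq_ltn_trans ik ks).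
lia.
Qed.

Lemma adj_chain_map_sorted (f : nat -> I) (J : seq nat) : sorted ltn J ->
  (forall j j', j \in J -> j' \in J -> (j < j')%N ->
     (forall l, (j < l < j')%N -> l \notin J) -> adj phi (f j) (f j')) ->
  adj_chain phi (map f J).
Proof.
elim: J => [|x [|y J] IH] //= /andP[xy pJ] adjf.
have yJ_gt l : l \in y :: J -> (x < l)%N.
  by rewrite inE => /orP[/eqP ->//|/(allP (order_path_min ltn_trans pJ))/(ltn_trans xy)].
split.
  apply: adjf; rewrite ?inE ?eqxx ?orbT // => l /andP[xl ly].
  rewrite !inE negb_or (gtn_eqF xl) (ltn_eqF ly) /=; apply/negP.
  by move/(allP (order_path_min ltn_trans pJ)); rewrite ltnNge ltnW.
apply: IH => // j j' jJ j'J jj' between.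
apply: adjf; rewrite ?(in_cons x) ?jJ ?j'J ?orbT // => l jlj'.
rewrite inE negb_or between // andbT.
by case/andP: jlj' => jl _; rewrite gtn_eqF // (ltn_trans (yJ_gt j jJ) jl).
Qed.

End Walks.

Section Restriction.
Variables (R : realType) (V : finType) (phi : V -> set (R * R)) (Rg : set (R * R)).
Local Notation split := (split_vertex phi Rg).
Local Notation proj := (fun z : split => (sval z).1).

Lemma restr_rep_sub (z : split) : restr_rep phi Rg z `<=` phi (proj z) `&` Rg.
Proof.
case: z => -[v C] /= vC y; rewrite /restr_rep /= => Cy.
by case: vC Cy => x [_ ->] [_ []].
Qed.

Lemma restr_walk_proj (W : set V) (x y : split) q :
  walk (restr_rep phi Rg) [set z | W (proj z)] x y q ->
  exists2 t, walk phi W (proj x) (proj y) t & (size t <= size q)%N.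
Proof.
case=> q' [-> [<- [ch Wq]]]; elim: q' x ch Wq => [|z q' IH] x /= ch Wq.
  exists [:: proj x] => //; exists [::]; split => //; split => //; split => //.
  by move=> w [<-|//]; exact: (Wq x (or_introl erefl)).
case: ch => -[xz [w [xw zw]]] ch.
have [t wt st] := IH z ch (fun w zw => Wq w (or_intror zw)).
have [e|ne] := eqVneq (proj x) (proj z); first by exists t; rewrite ?e // ltnW.
exists (proj x :: t); last by [].
apply: walk_cons wt; last exact: (Wq x (or_introl erefl)).
split; first exact/eqP.
by exists w; split; [exact: (restr_rep_sub xw).1|exact: (restr_rep_sub zw).1].
Qed.

End Restriction.

Section SplitPath.
Variables (R : realType) (V : finType) (phi : V -> set (R * R)) (Rg : set (R * R)).
Variables (D : set V) (u v : V) (p : seq V) (g : R -> R * R) (a b : R).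
Hypotheses (p_shortest : shortest_rel phi D u v p) (g_curve : curve_of phi u p g).
Hypotheses (phi_closed : forall x, closed (phi x)) (g_in_Rg : g @` seg a b `<=` Rg).
Hypotheses (a_ge0 : 0 <= a) (a_lt_b : a < b) (b_le1 : b <= 1).

Let ab_I01 : seg a b `<=` @I01 R := seg_sub_I01 a_ge0 b_le1.

Let seg_a : seg a b a. Proof. by rewrite /seg /= lexx ltW. Qed.

Let seg_b : seg a b b. Proof. by rewrite /seg /= lexx ltW. Qed.

Definition trace j := seg a b `&` g @^-1` phi (nth u p j).

Lemma trace_closed j : closed (trace j).
Proof.
apply: closed_within_preimage; [exact: seg_closed| |exact: phi_closed].
exact: continuous_subspaceW ab_I01 g_curve.1.1.
Qed.

Lemma trace_cover s : seg a b s -> exists2 j, (j < size p)%N & trace j s.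
Proof.
move=> abs; have [x [/In_mem xp gx]] := g_curve.2.1 s (ab_I01 abs).
by exists (index x p); rewrite ?index_mem // /trace /preimage /= nth_index.
Qed.

Lemma trace_le i j s t : (i < j)%N -> (j < size p)%N -> trace i s -> trace j t -> s <= t.
Proof.
by move=> ij jp [/ab_I01 Is gs] [/ab_I01 It gt]; exact: g_curve.2.2.2 ij jp Is It gs gt.
Qed.

Lemma trace_is_interval j : (j < size p)%N -> is_interval (trace j).
Proof.
move=> jp s t [abs gs] [abt gt] tau /andP[stau taut].
have abtau : seg a b tau by apply: (seg_is_interval abs abt); apply/andP.
have [l lp [_ gl]] := trace_cover abtau; split => //.
have [lj|jl|<- //] := ltngtP l j.
- suff -> : tau = s by []; apply/eqP; rewrite eq_le stau andbT.
  exact: (trace_le lj jp (conj abtau gl) (conj abs gs)).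
- suff -> : tau = t by []; apply/eqP; rewrite eq_le taut.
  exact: (trace_le jl lp (conj abt gt) (conj abtau gl)).
Qed.

(* Consecutive nonempty traces meet: a gap between their extreme points would
   be covered by an intermediate vertex of [p]. *)
Lemma trace_touch i j : (i < j < size p)%N -> trace i !=set0 -> trace j !=set0 ->
  (forall l, (i < l < j)%N -> ~ (trace l !=set0)) -> exists s, trace i s /\ trace j s.
Proof.
move=> /andP[ij jp] Ti Tj gap.
have [m Tim maxm] : exists2 m, trace i m & forall x, trace i x -> x <= m.
  by apply: closed_has_max Ti _; [exact: trace_closed|exists b => x [/andP[]]].
have [m' Tjm' minm'] : exists2 m', trace j m' & forall x, trace j x -> m' <= x.
  by apply: closed_has_min Tj _; [exact: trace_closed|exists a => x [/andP[]]].
have ip := ltn_trans ij jp.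
suff em : m = m' by exists m; split; rewrite // em.
apply/eqP; rewrite eq_le (trace_le ij jp Tim Tjm') /= leNgt; apply/negP => m'm.
pose tau := (m + m') / 2.
have [mtau taum'] : m < tau /\ tau < m' by split; rewrite /tau; lra.
have abtau : seg a b tau.
  apply: (seg_is_interval Tim.1 Tjm'.1); apply/andP; split; exact: ltW.
have [l lp Tl] := trace_cover abtau.
have [li|il] := leqP l i.
  suff : tau <= m by rewrite leNgt mtau.
  move: li; rewrite leq_eqVlt => /orP[/eqP eli|li]; last exact: trace_le li ip Tl Tim.
  by apply: maxm; rewrite -eli.
have [lj|jl] := ltnP l j; first by case: (gap l); [apply/andP|exists tau].
suff : m' <= tau by rewrite leNgt taum'.
move: jl; rewrite leq_eqVlt => /orP[/eqP ejl|jl]; last exact: trace_le jl lp Tjm' Tl.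
by apply: minm'; rewrite ejl.
Qed.

Definition trace_support := [seq j <- iota 0 (size p) | `[< trace j !=set0 >]].
Local Notation S := trace_support.

Lemma mem_trace_support j : j \in S <-> (j < size p)%N /\ trace j !=set0.
Proof.
rewrite mem_filter mem_iota add0n /=.
by split => [/andP[/asboolP]|[jp /asboolP ->]].
Qed.

Lemma trace_support_sorted : sorted ltn S.
Proof. by apply: sorted_filter; [exact: ltn_trans|exact: iota_ltn_sorted]. Qed.

Lemma trace_support_neq0 : S != [::].
Proof.
have [j jp Tja] := trace_cover seg_a.
have : j \in S by apply/mem_trace_support; split => //; exists a.
by apply: contraTneq => ->.
Qed.

Lemma head_trace_support : head 0 S \in S.
Proof. by case: S trace_support_neq0 => // x s _; exact: mem_head. Qed.

Lemma last_trace_support : last 0 S \in S.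
Proof. by case: S trace_support_neq0 => // x s _; exact: mem_last. Qed.

Lemma trace_head : trace (head 0 S) a.
Proof.
have [j jp Tja] := trace_cover seg_a.
have jS : j \in S by apply/mem_trace_support; split => //; exists a.
have [hp [s Ths]] := (mem_trace_support _).1 head_trace_support.
have /andP[hj _] := sorted_ltn_bounds trace_support_sorted jS.
move: hj; rewrite leq_eqVlt => /orP[/eqP -> //|hj].
suff <- : s = a by []; apply/eqP; rewrite eq_le (trace_le hj jp Ths Tja) /=.
by case/andP: Ths.1.
Qed.

Lemma trace_last : trace (last 0 S) b.
Proof.
have [j jp Tjb] := trace_cover seg_b.
have jS : j \in S by apply/mem_trace_support; split => //; exists b.
have [lp [s Tls]] := (mem_trace_support _).1 last_trace_support.
have /andP[_ jl] := sorted_ltn_bounds trace_support_sorted jS.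
move: jl; rewrite leq_eqVlt => /orP[/eqP <- //|jl].
suff <- : s = b by []; apply/eqP; rewrite eq_le (trace_le jl lp Tjb Tls) andbT.
by case/andP: Tls.1.
Qed.

(* Any point of a nonempty trace may serve as base point, by [trace_in_comp]. *)
Definition trace_comp j :=
  [set y | arc_rel (phi (nth u p j) `&` Rg) (g (xget 0 (trace j))) y].

Lemma trace_sub j : g @` trace j `<=` phi (nth u p j) `&` Rg.
Proof. by move=> _ [s [abs gs] <-]; split => //; apply: g_in_Rg; exists s. Qed.

Lemma trace_comp_arc_component j :
  trace j !=set0 -> arc_component (phi (nth u p j) `&` Rg) (trace_comp j).
Proof.
move=> [s Ts]; exists (g (xget 0 (trace j))); split => //.
by apply: trace_sub; apply: imageP; exact: xgetI Ts.
Qed.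

Lemma trace_in_comp j s : (j < size p)%N -> trace j s -> trace_comp j (g s).
Proof.
move=> jp Ts; have Tx := xgetI 0 Ts.
apply: arc_rel_image_interval g_curve.1 _ (trace_is_interval jp) (@trace_sub j) Tx Ts.
by move=> x [/ab_I01].
Qed.

Lemma exists_split_choice : exists sp : nat -> split_vertex phi Rg,
  forall j, trace j !=set0 -> sval (sp j) = (nth u p j, trace_comp j).
Proof.
pose mk j (Tj : trace j !=set0) : split_vertex phi Rg :=
  exist _ (nth u p j, trace_comp j) (trace_comp_arc_component Tj).
have [j0 _ Tj0a] := trace_cover seg_a.
exists (fun j => if pselect (trace j !=set0) is left Tj then mk j Tj
                 else mk j0 (ex_intro _ a Tj0a)).
by move=> j Tj; case: pselect.
Qed.

Variable sp : nat -> split_vertex phi Rg.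
Hypothesis spE : forall j, trace j !=set0 -> sval (sp j) = (nth u p j, trace_comp j).

Let sp_rep j : trace j !=set0 -> restr_rep phi Rg (sp j) = trace_comp j.
Proof. by move=> Tj; rewrite /restr_rep spE. Qed.

Let sp_vertex j : trace j !=set0 -> (sval (sp j)).1 = nth u p j.
Proof. by move=> Tj; rewrite spE. Qed.

Let p_uniq : uniq p.
Proof. by apply/NoDup_uniq; case: p_shortest => -[]. Qed.

Let S_trace j : j \in S -> trace j !=set0.
Proof. by case/mem_trace_support. Qed.

Lemma split_path_adj_chain : adj_chain (restr_rep phi Rg) (map sp S).
Proof.
apply: adj_chain_map_sorted trace_support_sorted _.
move=> j j' /mem_trace_support[jp Tj] /mem_trace_support[j'p Tj'] jj' gap.
have [|l jlj' Tl|s [Tjs Tj's]] := trace_touch _ Tj Tj'; first by rewrite jj'.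
  case/negP: (gap l jlj'); apply/mem_trace_support; split => //.
  by case/andP: jlj' => _ /ltn_trans; apply.
split; last by exists (g s); rewrite !sp_rep //; split; exact: trace_in_comp.
move=> /(congr1 (fun z => (sval z).1)); rewrite !sp_vertex // => /eqP.
by rewrite (nth_uniq u jp j'p p_uniq) => /eqP ejj'; rewrite ejj' ltnn in jj'.
Qed.

Lemma split_path_NoDup : List.NoDup (map sp S).
Proof.
apply: (List.NoDup_map_inv (fun z => (sval z).1)); rewrite List_mapE -map_comp.
rewrite (@eq_in_map _ _ _ (nth u p) S).1 => [|j /S_trace Tj]; last by rewrite /= sp_vertex.
apply/NoDup_uniq; rewrite map_inj_in_uniq.
  exact: sorted_uniq ltn_trans ltnn _ trace_support_sorted.
move=> i j /mem_trace_support[ip _] /mem_trace_support[jp _] /eqP.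
by rewrite (nth_uniq u ip jp p_uniq) => /eqP.
Qed.

Lemma split_path_walk :
  walk (restr_rep phi Rg) setT (sp (head 0 S)) (sp (last 0 S)) (map sp S).
Proof.
have := split_path_adj_chain; case: S trace_support_neq0 => // j s _ ch.
by exists (map sp s); split => //; split; [rewrite last_map|split].
Qed.

Lemma split_path_shortest : shortest_rel (restr_rep phi Rg) (restr_set phi Rg D)
  (sp (head 0 S)) (sp (last 0 S)) (map sp S).
Proof.
split; first by split; [exact: split_path_walk|exact: split_path_NoDup].
move=> q wq; pose W := [set x | List.In x p \/ D x].
have proj_W : [set z | List.In z (map sp S) \/ restr_set phi Rg D z] `<=`
    [set z | W (sval z).1].
  move=> z [/In_mapP[j [<- /In_mem jS]]|Dz]; last by right.
  have [jp Tj] := (mem_trace_support j).1 jS.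
  by left; rewrite sp_vertex //; apply/In_mem; exact: mem_nth.
have [t wt tq] := restr_walk_proj (walk_sub proj_W wq).
rewrite (sp_vertex (S_trace head_trace_support)) in wt.
rewrite (sp_vertex (S_trace last_trace_support)) in wt.
have hl : (head 0 S <= last 0 S < size p)%N.
  have [-> _] := (mem_trace_support _).1 last_trace_support; rewrite andbT.
  by case/andP: (sorted_ltn_bounds trace_support_sorted head_trace_support).
have := shortest_rel_infix_size p_shortest hl wt.
have := sorted_ltn_size trace_support_sorted; rewrite size_map; lia.
Qed.

Lemma split_path_curve : curve_of (restr_rep phi Rg) (sp (head 0 S)) (map sp S) (g \o lerp a b).
Proof.
have lerp_ab r : I01 r -> seg a b (lerp a b r).
  exact: is_interval_lerp (@seg_is_interval R a b) seg_a seg_b.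
split; first by apply: arc_param_lerp g_curve.1 _ _ _; rewrite ?lt_eqF //; exact: ab_I01.
split.
  move=> r /lerp_ab abr; have [j jp Tj] := trace_cover abr.
  have Tj0 : trace j !=set0 by exists (lerp a b r).
  exists (sp j); split; first by apply: In_map; apply/In_mem/mem_trace_support.
  by rewrite sp_rep //; exact: trace_in_comp.
split.
  move=> _ /In_mapP[j [<- /In_mem /mem_trace_support[jp Tj]]].
  rewrite sp_rep // image_lerp //.
  have -> : g @` seg a b `&` trace_comp j = g @` trace j.
    apply/seteqP; split => [y [[s abs <-] [_ [[gs _] _]]]|_ [s Ts <-]]; first by exists s.
    by split; [exists s; [exact: Ts.1|]|exact: trace_in_comp].
  apply: connected_continuous_connected; first exact/connected_intervalP/trace_is_interval.
  by apply: (continuous_subspaceW _ g_curve.1.1) => x [/ab_I01].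
move=> i j s t ij; rewrite size_map => jS Is It.
have iS : (i < size S)%N := ltn_trans ij jS.
have [ip Ti] := (mem_trace_support _).1 (mem_nth 0 iS).
have [jp Tj] := (mem_trace_support _).1 (mem_nth 0 jS).
rewrite !(nth_map 0) // !sp_rep // => -[_ [[gs _] _]] [_ [[gt _] _]].
rewrite -(ler_lerp _ _ a_lt_b).
apply: trace_le jp (conj (lerp_ab s Is) gs) (conj (lerp_ab t It) gt).
by apply: (sorted_ltn_nth ltn_trans 0 trace_support_sorted) => //; rewrite inE.
Qed.

Lemma shortest_curve_restr_subarc :
  shortest_curve (restr_rep phi Rg) (restr_set phi Rg D) (g @` seg a b).
Proof.
exists (sp (head 0 S)), (sp (last 0 S)), (map sp S), (g \o lerp a b).
split; first exact: split_path_shortest.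
split; first exact: split_path_curve.
have [hp Th] := (mem_trace_support _).1 head_trace_support.
have [lp Tl] := (mem_trace_support _).1 last_trace_support.
split; first by rewrite (sp_rep Th) /= lerp0; exact: trace_in_comp trace_head.
split; first by rewrite (sp_rep Tl) /= lerp1; exact: trace_in_comp trace_last.
by rewrite image_lerp.
Qed.

End SplitPath.

Theorem lemma10 (R : realType) (V : finType) (phi : V -> set (R * R))
    (D : set V) (Rg : set (R * R)) (pi pi' : set (R * R)) :
  string_rep phi -> is_region phi Rg ->
  shortest_curve phi D pi -> sub_curve pi' pi -> pi' `<=` Rg ->
  shortest_curve (restr_rep phi Rg) (restr_set phi Rg D) pi'.
Proof.
move=> [arcs _] _ [u [v [p [g [p_shortest [g_curve [_ [_ ->]]]]]]]] sub sub_Rg.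
have [a [b [a0 ab b1 epi']]] := sub_curve_param g_curve.1 sub.
have phi_closed x : closed (phi x).
  by have [h [ah ->]] := arcs x; exact: arc_image_closed ah (lexx 0) (lexx 1).
rewrite epi' in sub_Rg *.
have [sp spE] := exists_split_choice g_curve sub_Rg a0 ab b1.
exact: (shortest_curve_restr_subarc p_shortest g_curve phi_closed sub_Rg a0 ab b1 spE).
Qed.
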